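(* Let $\Gamma<\mathrm{PSL}_2(\mathbb{C})$ be discrete, co-compact and torsion-free, $f:\mathbb{R}/2\pi\mathbb{Z}\to\mathbb{R}$ smooth with $\hat f(0)=0$, $T>0$ and $0<\eta\le\eta_0$. Then (1) the distribution $\mu_{T,f,\eta}$ has mean $b_{f,\eta}$; (2) $\mu_{T,f,\eta}$ is compactly supported on the interval \[\Big[b_{f,\eta}-2\sum_{|s|,|p|<T}m_\Gamma(\pi_{is,p})|\hat f(-p)||c_{s,\eta}|,\ b_{f,\eta}+2\sum_{|s|,|p|<T}m_\Gamma(\pi_{is,p})|\hat f(-p)||c_{s,\eta}|\Big]\] \[\subset\Big[b_{f,\eta}-2\sum_{s,p}m_\Gamma(\pi_{is,p})|\hat f(-p)||c_{s,\eta}|,\ b_{f,\eta}+2\sum_{s,p}m_\Gamma(\pi_{is,p})|\hat f(-p)||c_{s,\eta}|\Big],\] the sums running over principal series representations $\pi_{is,p}$ occurring in $L^2(\Gamma\backslash G)$.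
   Context: $G=\mathrm{PSL}_2(\mathbb{C})$. $\pi_{is,p}$ ($s\in\mathbb{R},p\in\mathbb{Z}$) is the unitary principal series representation induced from $\begin{pmatrix}e^{(u+i\theta)/2}&*\\0&e^{-(u+i\theta)/2}\end{pmatrix}\mapsto e^{ius+ip\theta}$; $m_\Gamma(\pi)$ is the multiplicity in $L^2(\Gamma\backslash G)$. $\hat f(p)=\frac1{2\pi}\int_0^{2\pi}f(\theta)e^{-ip\theta}d\theta$. Fix smooth even nonnegative $\psi$ supported in $[-1,1]$, $\int\psi=1$; $\psi_\eta(t)=\eta^{-1}\psi(t/\eta)$; $c_{s,\eta}=\int\psi_\eta(t)\frac{e^{t(1+is)}}{1+is}dt$; $b_{f,\eta}=\big(\sum_{p\ne0}m_\Gamma(\pi_{0,p})\mathrm{Re}\,\hat f(p)-2\mathrm{Re}\,\hat f(1)\big)2c_{0,\eta}$. Let $(s_1,p_1),\dots,(s_n,p_n)$ be the distinct pairs with $s_j\ne0$, $|s_j|,|p_j|<T$, $m_\Gamma(\pi_{is_j,p_j})\neq0$; $w_T(x)=2\sum_{j=1}^nm_\Gamma(\pi_{is_j,p_j})\mathrm{Re}\big(\hat f(-p_j)e^{2\pi ix_j}c_{s_j,\eta}\big)+b_{f,\eta}$ on $\mathbb{T}^n=\mathbb{R}^n/\mathbb{Z}^n$; $A$ is the closure of $\{(s_jy/2\pi)_j:y\in\mathbb{R}\}$ in $\mathbb{T}^n$ with Haar probability measure; $\mu_{T,f,\eta}$ is the pushforward of this Haar measure under $w_T|_A$. Equivalently,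 $\int h\,d\mu_{T,f,\eta}=\lim_{Y\to\infty}\frac1Y\int_{\eta_0}^Yh(E^{(T)}[f,g_{y,\eta}])dy$ for continuous $h$, where $E^{(T)}[f,g_{y,\eta}]=2\sum_{j}m_\Gamma(\pi_{is_j,p_j})\mathrm{Re}(\hat f(-p_j)e^{is_jy}c_{s_j,\eta})+b_{f,\eta}$. *)

From Stdlib Require Import Reals Lra ZArith List.
From Coquelicot Require Export Coquelicot.
Open Scope R_scope.

Definition lsum {A : Type} (F : A -> R) (L : list A) : R :=
  fold_right (fun a acc => F a + acc) 0 L.

(* Abstract spectral data: multiplicity m s p = m_Gamma(pi_{is,p}). *)
Definition mult_data := R -> Z -> nat.

Definition smooth (f : R -> R) : Prop := forall (n : nat) (x : R), ex_derive_n f n x.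
Definition periodic_2pi (f : R -> R) : Prop := forall x, f (x + 2 * PI) = f x.

(* Fourier coefficient  fhat(p) = 1/(2pi) int_0^{2pi} f(t) e^{-ipt} dt, split into
   real and imaginary parts. *)
Definition fhat (f : R -> R) (p : Z) : C :=
  (/ (2 * PI) * RInt (fun t => f t * cos (IZR p * t)) 0 (2 * PI),
   - (/ (2 * PI) * RInt (fun t => f t * sin (IZR p * t)) 0 (2 * PI))).

Definition psi_eta (psi : R -> R) (eta : R) (t : R) : R := / eta * psi (t / eta).

(* c_{s,eta} = int psi_eta(t) e^{t(1+is)} / (1+is) dt ; psi_eta vanishes outside
   [-eta, eta], so the integral over R is the integral over [-eta, eta]. *)
Definition c_coef (psi : R -> R) (s eta : R) : C :=
  Cdiv (RInt (fun t => psi_eta psi eta t * exp t * cos (t * s)) (- eta) eta,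
        RInt (fun t => psi_eta psi eta t * exp t * sin (t * s)) (- eta) eta)
       (1, s).

(* sum_{p <> 0} m(0,p) Re fhat(p), summed symmetrically over p = +-(k+1) *)
Definition b_series (m : mult_data) (f : R -> R) : R :=
  Series (fun k : nat =>
    INR (m 0 (Z.of_nat (S k))) * Re (fhat f (Z.of_nat (S k)))
    + INR (m 0 (- Z.of_nat (S k))%Z) * Re (fhat f (- Z.of_nat (S k))%Z)).

(* b_{f,eta} ; c_{0,eta} = int psi_eta(t) e^t dt is real *)
Definition b_coef (m : mult_data) (f psi : R -> R) (eta : R) : R :=
  (b_series m f - 2 * Re (fhat f 1)) * 2 * Re (c_coef psi 0 eta).

Definition bound_term (m : mult_data) (f psi : R -> R) (eta : R) (q : R * Z) : R :=
  INR (m (fst q) (snd q)) * Cmod (fhat f (- snd q)%Z) * Cmod (c_coef psi (fst q) eta).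

(* E^{(T)}[f, g_{y,eta}], where L enumerates the distinct pairs (s,p) with
   |s|,|p| < T and m(s,p) <> 0; only those with s <> 0 enter. *)
Definition E_T (m : mult_data) (f psi : R -> R) (eta : R) (L : list (R * Z)) (y : R) : R :=
  2 * lsum (fun q => if Req_EM_T (fst q) 0 then 0 else
              INR (m (fst q) (snd q)) *
              Re (Cmult (Cmult (fhat f (- snd q)%Z) (cos (fst q * y), sin (fst q * y)))
                        (c_coef psi (fst q) eta))) L
  + b_coef m f psi eta.

(* integral of h against mu_{T,f,eta}, via the time-average description:
   lim_{Y -> oo} (1/Y) int_{eta0}^{Y} h(E(y)) dy = l *)
Definition mu_integral_is (m : mult_data) (f psi : R -> R) (eta eta0 : R)
  (L : list (R * Z)) (h : R -> R) (l : R) : Prop :=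
  is_lim (fun Y => / Y * RInt (fun y => h (E_T m f psi eta L y)) eta0 Y) p_infty l.

(* sum over all pairs (s,p) with m(s,p) <> 0 of the nonnegative terms, as the
   supremum of finite partial sums (value in Rbar, possibly +oo) *)
Definition full_bound (m : mult_data) (f psi : R -> R) (eta : R) : Rbar :=
  Lub_Rbar (fun x => exists L : list (R * Z), NoDup L /\
      (forall q, In q L -> m (fst q) (snd q) <> 0%nat) /\
      x = lsum (bound_term m f psi eta) L).

(** Write [E_T y = b + 2 g y], where [g] is a finite combination of [y ↦ cos (s y)] and
    [y ↦ sin (s y)] with frequencies [s <> 0].  Such a [g] has a bounded antiderivative,
    so its time average over [[eta0, Y]] is [O(1/Y)] and the mean of [mu_{T,f,eta}] is [b].
    Since [|e^{isy}| = 1], each summand of [g] is bounded by the corresponding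
    [m |fhat(-p)| |c_{s,eta}|], so [E_T] never leaves [[b - 2 BT, b + 2 BT]] and every
    continuous [h] vanishing there averages to [0].  Finally [BT] is one of the finite
    partial sums whose supremum defines the full bound. *)

From Stdlib Require Import Reals ZArith List Lra.
From Coquelicot Require Import Coquelicot.
Open Scope R_scope.

Definition bounded_primitive (g : R -> R) : Prop :=
  (forall y, continuous g y) /\
  exists P M, forall y, is_derive P y (g y) /\ Rabs (P y) <= M.

Lemma bounded_primitive_0 : bounded_primitive (fun _ => 0).
Proof.
  split; [intros y; apply continuous_const|].
  exists (fun _ => 0), 0; intros y; split.
  - auto_derive; auto.
  - rewrite Rabs_R0; lra.
Qed.

Lemma bounded_primitive_ext g1 g2 :
  (forall y, g1 y = g2 y) -> bounded_primitive g1 -> bounded_primitive g2.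
Proof.
  intros E [Hc [P [M HP]]]; split.
  - intros y; apply (continuous_ext g1); auto.
  - exists P, M; intros y; rewrite <- E; apply HP.
Qed.

Lemma bounded_primitive_plus g1 g2 :
  bounded_primitive g1 -> bounded_primitive g2 ->
  bounded_primitive (fun y => g1 y + g2 y).
Proof.
  intros [C1 [P1 [M1 H1]]] [C2 [P2 [M2 H2]]]; split.
  - intros y; apply (continuous_plus g1 g2); auto.
  - exists (fun y => P1 y + P2 y), (M1 + M2); intros y.
    destruct (H1 y) as [D1 B1], (H2 y) as [D2 B2]; split.
    + apply (is_derive_plus P1 P2); auto.
    + eapply Rle_trans; [apply Rabs_triang|lra].
Qed.

Lemma bounded_primitive_scal k g :
  bounded_primitive g -> bounded_primitive (fun y => k * g y).
Proof.
  intros [Cg [P [M H]]]; split.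
  - intros y; apply (continuous_mult (fun _ => k) g); auto using continuous_const.
  - exists (fun y => k * P y), (Rabs k * M); intros y.
    destruct (H y) as [D B]; split.
    + apply (is_derive_scal P y k); auto.
    + rewrite Rabs_mult; apply Rmult_le_compat_l; auto using Rabs_pos.
Qed.

Lemma bounded_primitive_lsum {A : Type} (F : A -> R -> R) (L : list A) :
  (forall q, bounded_primitive (F q)) ->
  bounded_primitive (fun y => lsum (fun q => F q y) L).
Proof.
  intros HF; induction L as [|a L IH]; simpl.
  - apply bounded_primitive_0.
  - apply bounded_primitive_plus; auto.
Qed.

Lemma bounded_primitive_trig a c s :
  s <> 0 -> bounded_primitive (fun y => a * cos (s * y) + c * sin (s * y)).
Proof.
  intros Hs; split.
  - intros y; apply (ex_derive_continuous (K := R_AbsRing) (V := R_NormedModule)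
      (fun y => a * cos (s * y) + c * sin (s * y))).
    auto_derive; auto.
  - exists (fun y => (a * sin (s * y) - c * cos (s * y)) / s),
      ((Rabs a + Rabs c) / Rabs s).
    intros y; split.
    + auto_derive; auto. field; auto.
    + unfold Rdiv; rewrite Rabs_mult, Rabs_inv.
      apply Rmult_le_compat_r; [left; apply Rinv_0_lt_compat, Rabs_pos_lt; auto|].
      eapply Rle_trans; [apply Rabs_triang|].
      rewrite Rabs_Ropp, !Rabs_mult.
      assert (Rabs (sin (s * y)) <= 1) by apply Rabs_le, SIN_bound.
      assert (Rabs (cos (s * y)) <= 1) by apply Rabs_le, COS_bound.
      pose proof (Rabs_pos a); pose proof (Rabs_pos c).
      pose proof (Rabs_pos (sin (s * y))); pose proof (Rabs_pos (cos (s * y))).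
      nra.
Qed.

Definition expi (x : R) : C := (cos x, sin x).

Lemma Cmod_expi x : Cmod (expi x) = 1.
Proof.
  unfold Cmod, expi; simpl; rewrite !Rmult_1_r, <- sqrt_1; f_equal.
  rewrite <- (sin2_cos2 x); unfold Rsqr; ring.
Qed.

Lemma bounded_primitive_Re_expi (z : C) s :
  s <> 0 -> bounded_primitive (fun y => Re (z * expi (s * y))).
Proof.
  intros Hs; destruct z as [a c].
  apply bounded_primitive_ext with (fun y => a * cos (s * y) + (- c) * sin (s * y)).
  - intros y; unfold expi, Cmult, Re; simpl; ring.
  - apply bounded_primitive_trig; auto.
Qed.

Lemma is_lim_bounded_div_id (G : R -> R) K :
  (forall Y, Rabs (G Y) <= K) -> is_lim (fun Y => G Y / Y) p_infty 0.
Proof.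
  intros HG.
  assert (HK : is_lim (fun Y => K * / Y) p_infty 0).
  { replace (Finite 0) with (Rbar_mult K (Rbar_inv p_infty))
      by (simpl; f_equal; ring).
    apply is_lim_scal_l, is_lim_inv; [apply is_lim_id|discriminate]. }
  apply is_lim_le_le_loc with (fun Y => - (K * / Y)) (fun Y => K * / Y).
  - exists 0; intros Y HY.
    assert (HGY := HG Y); apply Rabs_le_between in HGY.
    pose proof (Rinv_0_lt_compat Y HY).
    unfold Rdiv; split; nra.
  - replace (Finite 0) with (Rbar_opp 0) by (simpl; f_equal; ring).
    apply is_lim_opp, HK.
  - exact HK.
Qed.

Lemma is_lim_time_average g b eta0 :
  bounded_primitive g ->
  is_lim (fun Y => / Y * RInt (fun y => g y + b) eta0 Y) p_infty b.
Proof.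
  intros [Cg [P [M HP]]].
  assert (Hint : forall Y, RInt (fun y => g y + b) eta0 Y
                           = (P Y + b * Y) - (P eta0 + b * eta0)).
  { intros Y; apply is_RInt_unique, (is_RInt_derive (fun y => P y + b * y)).
    - intros x _; apply (is_derive_plus P (fun y => b * y)); [apply HP|].
      auto_derive; auto; ring.
    - intros x _; apply (continuous_plus g (fun _ => b)); auto using continuous_const. }
  apply is_lim_ext_loc with
    (fun Y => b + (P Y - P eta0 - b * eta0) / Y).
  - exists 0; intros Y HY; rewrite Hint; field; lra.
  - replace (Finite b) with (Finite (b + 0)) by (f_equal; ring).
    apply is_lim_plus'; [apply is_lim_const|].
    apply is_lim_bounded_div_id with (M + M + Rabs (b * eta0)); intros Y.
    destruct (HP Y) as [_ BY], (HP eta0) as [_ B0].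
    unfold Rminus; eapply Rle_trans; [apply Rabs_triang|].
    rewrite Rabs_Ropp; eapply Rle_trans;
      [apply Rplus_le_compat_r, Rabs_triang|rewrite Rabs_Ropp; lra].
Qed.

Lemma Rabs_lsum_le {A : Type} (F G : A -> R) (L : list A) :
  (forall q, Rabs (F q) <= G q) -> Rabs (lsum F L) <= lsum G L.
Proof.
  intros H; induction L as [|a L IH]; simpl.
  - rewrite Rabs_R0; lra.
  - eapply Rle_trans; [apply Rabs_triang|specialize (H a); lra].
Qed.

Section SpectralTerms.

Variables (m : mult_data) (f psi : R -> R) (eta : R).

Definition spectral_term (q : R * Z) (y : R) : R :=
  if Req_EM_T (fst q) 0 then 0 else
    INR (m (fst q) (snd q)) *
    Re (fhat f (- snd q)%Z * expi (fst q * y) * c_coef psi (fst q) eta).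

Lemma E_T_spectral_terms L y :
  E_T m f psi eta L y = 2 * lsum (fun q => spectral_term q y) L + b_coef m f psi eta.
Proof. reflexivity. Qed.

Lemma spectral_term_Re_expi q y : fst q <> 0 ->
  spectral_term q y = INR (m (fst q) (snd q)) *
    Re (fhat f (- snd q)%Z * c_coef psi (fst q) eta * expi (fst q * y)).
Proof.
  intros Hs; unfold spectral_term; destruct (Req_EM_T (fst q) 0) as [E|_]; [easy|].
  do 2 f_equal; ring.
Qed.

Lemma bounded_primitive_spectral_term q : bounded_primitive (spectral_term q).
Proof.
  destruct (Req_EM_T (fst q) 0) as [E|Hs].
  - apply bounded_primitive_ext with (fun _ => 0); [|apply bounded_primitive_0].
    intros y; unfold spectral_term; destruct (Req_EM_T (fst q) 0); easy.
  - apply bounded_primitive_ext with (fun y => INR (m (fst q) (snd q)) *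
      Re (fhat f (- snd q)%Z * c_coef psi (fst q) eta * expi (fst q * y))).
    + intros y; symmetry; apply spectral_term_Re_expi, Hs.
    + apply bounded_primitive_scal, bounded_primitive_Re_expi, Hs.
Qed.

Lemma Rabs_spectral_term_le q y :
  Rabs (spectral_term q y) <= bound_term m f psi eta q.
Proof.
  unfold bound_term.
  pose proof (pos_INR (m (fst q) (snd q))).
  pose proof (Cmod_ge_0 (fhat f (- snd q)%Z)).
  pose proof (Cmod_ge_0 (c_coef psi (fst q) eta)).
  destruct (Req_EM_T (fst q) 0) as [E|Hs].
  - unfold spectral_term; destruct (Req_EM_T (fst q) 0); [|easy].
    rewrite Rabs_R0; repeat apply Rmult_le_pos; auto.
  - rewrite spectral_term_Re_expi, Rabs_mult, Rabs_pos_eq, Rmult_assoc by auto.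
    apply Rmult_le_compat_l; auto.
    eapply Rle_trans; [apply re_le_Cmod|].
    rewrite !Cmod_mult, Cmod_expi; lra.
Qed.

Lemma E_T_between L y :
  let BT := lsum (bound_term m f psi eta) L in
  b_coef m f psi eta - 2 * BT <= E_T m f psi eta L y <= b_coef m f psi eta + 2 * BT.
Proof.
  intros BT; rewrite E_T_spectral_terms.
  assert (H := Rabs_lsum_le _ _ L (fun q => Rabs_spectral_term_le q y)).
  apply Rabs_le_between in H; fold BT in H; lra.
Qed.

Lemma lsum_bound_term_le_full_bound L :
  NoDup L -> (forall q, In q L -> m (fst q) (snd q) <> 0%nat) ->
  Rbar_le (lsum (bound_term m f psi eta) L) (full_bound m f psi eta).
Proof.
  intros Hnd Hm; apply Lub_Rbar_correct; exists L; auto.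
Qed.

End SpectralTerms.

Lemma Rbar_interval_widen (b r : R) (B : Rbar) x :
  Rbar_le r B -> b - 2 * r <= x <= b + 2 * r ->
  Rbar_le (Rbar_minus b (Rbar_mult 2 B)) x /\ Rbar_le x (Rbar_plus b (Rbar_mult 2 B)).
Proof.
  intros HB Hx; destruct B as [B| |]; simpl in HB |- *.
  - split; simpl; lra.
  - destruct (Rle_dec 0 2) as [h|h];
      [destruct (Rle_lt_or_eq_dec 0 2 h)|]; simpl; split; auto; lra.
  - destruct HB.
Qed.

Theorem corollary4p2
  (m : mult_data) (f psi : R -> R) (T eta eta0 : R) (L : list (R * Z))
  (* psi: smooth, even, nonnegative, supported in [-1,1], total integral 1 *)
  (Hpsi_smooth : smooth psi)
  (Hpsi_even : forall t, psi (- t) = psi t)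
  (Hpsi_nonneg : forall t, 0 <= psi t)
  (Hpsi_supp : forall t, 1 < Rabs t -> psi t = 0)
  (Hpsi_int : RInt psi (-1) 1 = 1)
  (* f : R/2piZ -> R smooth with fhat(0) = 0 *)
  (Hf_per : periodic_2pi f) (Hf_smooth : smooth f)
  (Hf0 : fhat f 0 = RtoC 0)
  (HT : 0 < T) (Heta0 : 0 < eta0) (Heta : 0 < eta) (Hetale : eta <= eta0)
  (* L enumerates the distinct pairs (s,p) with |s|,|p| < T and m(s,p) <> 0 *)
  (HLnd : NoDup L)
  (HL : forall q : R * Z, In q L <->
          (Rabs (fst q) < T /\ Rabs (IZR (snd q)) < T /\ m (fst q) (snd q) <> 0%nat)) :
  let b := b_coef m f psi eta in
  let BT := lsum (bound_term m f psi eta) L in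
  let B := full_bound m f psi eta in
  (* (1) the mean of mu_{T,f,eta} is b_{f,eta} *)
  mu_integral_is m f psi eta eta0 L (fun x => x) b /\
  (* (2) mu_{T,f,eta} is supported in [b - 2 BT, b + 2 BT] *)
  (forall h : R -> R, (forall x, continuous h x) ->
     (forall x, b - 2 * BT <= x <= b + 2 * BT -> h x = 0) ->
     mu_integral_is m f psi eta eta0 L h 0) /\
  (* ... and this interval lies in [b - 2 B, b + 2 B] *)
  (forall x, b - 2 * BT <= x <= b + 2 * BT ->
     Rbar_le (Rbar_minus b (Rbar_mult 2 B)) x /\
     Rbar_le x (Rbar_plus b (Rbar_mult 2 B))).
Proof.
  intros b BT B; unfold mu_integral_is; split; [|split].
  - eapply is_lim_ext; [|apply (is_lim_time_average
                             (fun y => 2 * lsum (fun q => spectral_term m f psi eta q y) L))].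
    + intros Y; reflexivity.
    + apply bounded_primitive_scal, bounded_primitive_lsum,
        bounded_primitive_spectral_term.
  - intros h _ Hh.
    eapply is_lim_ext; [|apply (is_lim_const 0)].
    intros Y; simpl; rewrite (RInt_ext _ (fun _ => 0)).
    + rewrite RInt_const; unfold scal; simpl; unfold mult; simpl; ring.
    + intros y _; apply Hh, E_T_between.
  - intros x; apply Rbar_interval_widen, lsum_bound_term_le_full_bound; auto.
    intros q Hq; apply HL in Hq; tauto.
Qed.
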